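(* Let $Q$ be a finite inverse semigroup. Then every left I-order in $Q$ is straight.
   Context: For an element $a$ of an inverse semigroup $Q$, $a^{-1}$ is its unique inverse. A subsemigroup $S$ of $Q$ is a left I-order in $Q$ if every $q\in Q$ can be written $q=a^{-1}b$ with $a,b\in S$; it is straight if $a,b$ can always be chosen with $a\,\mathcal{R}\,b$ in $Q$ (Green's relation of $Q$). *)

From mathcomp Require Import all_boot.
Set Implicit Arguments. Unset Strict Implicit. Unset Printing Implicit Defensive.

Section InvSg.
Variables (T : Type) (mul : T -> T -> T).

Definition is_inverse (a b : T) : Prop :=
  mul (mul a b) a = a /\ mul (mul b a) b = b.

Definition inverse_semigroup (inv : T -> T) : Prop :=
  [/\ associative mul,
      (forall a, is_inverse a (inv a)) &
      (forall a b, is_inverse a b -> b = inv a)].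

(** Green's relation R: a Q^1 = b Q^1. *)
Definition greenR (a b : T) : Prop :=
  (a = b \/ exists x, a = mul b x) /\ (b = a \/ exists y, b = mul a y).

End InvSg.

Section Orders.
Variables (T : finType) (mul : T -> T -> T) (inv : T -> T).

Definition subsemigroup (S : {set T}) : Prop :=
  forall a b, a \in S -> b \in S -> mul a b \in S.

Definition left_I_order (S : {set T}) : Prop :=
  subsemigroup S /\
  forall q : T, exists a b, [/\ a \in S, b \in S & q = mul (inv a) b].

Definition straight_left_I_order (S : {set T}) : Prop :=
  left_I_order S /\
  forall q : T, exists a b,
    [/\ a \in S, b \in S, greenR mul a b & q = mul (inv a) b].

End Orders.

From mathcomp Require Import all_boot.

(* Write q = a^-1 b with a, b in S. Any x in S with x^-1 x = (a a^-1)(b b^-1)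
   gives q = (xa)^-1 (xb), and xa R xb because both have range idempotent
   x x^-1. Such an x exists because in a finite inverse semigroup a left
   I-order meets the L-class of every idempotent g: writing g = a^-1 b, either
   g = a^-1 a, or g lies strictly below a^-1 a, whose D-class contains a a^-1,
   an idempotent with a principal left ideal at least as large. Induction on
   the size of that ideal gives y in S with y^-1 y = a a^-1, and x = y b. *)

Set Implicit Arguments. Unset Strict Implicit. Unset Printing Implicit Defensive.

Declare Scope isg_scope.

Section InverseSemigroup.
Variables (T : Type) (mul : T -> T -> T) (inv : T -> T).
Hypothesis invQ : inverse_semigroup mul inv.

Local Notation "x * y" := (mul x y) : isg_scope.
Local Notation "x ^-1" := (inv x) : isg_scope.
Local Open Scope isg_scope.

Definition idem (e : T) := e * e = e.

Lemma mulA : associative mul.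
Proof. by case: invQ. Qed.

Lemma mul_invK a : a * a^-1 * a = a.
Proof. by case: invQ => _ /(_ a) []. Qed.

Lemma inv_mulK a : a^-1 * a * a^-1 = a^-1.
Proof. by case: invQ => _ /(_ a) []. Qed.

Lemma mul_invKr w a : w * a * a^-1 * a = w * a.
Proof. by rewrite -!mulA (mulA a) mul_invK. Qed.

Lemma inv_mulKr w a : w * a^-1 * a * a^-1 = w * a^-1.
Proof. by rewrite -!mulA (mulA a^-1) inv_mulK. Qed.

Lemma inv_uniq a b : is_inverse mul a b -> b = a^-1.
Proof. by case: invQ => _ _; apply. Qed.

Lemma invK : involutive inv.
Proof. by move=> a; apply/esym/inv_uniq; split; [apply: inv_mulK | apply: mul_invK]. Qed.

Lemma idem_inv e : idem e -> e^-1 = e.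
Proof. by move=> He; apply/esym/inv_uniq; split; rewrite He. Qed.

Lemma idem_mulV a : idem (a * a^-1).
Proof. by rewrite /idem mulA mul_invK. Qed.

Lemma idem_Vmul a : idem (a^-1 * a).
Proof. by rewrite /idem mulA inv_mulK. Qed.

Lemma mul_idemK w e : idem e -> w * e * e = w * e.
Proof. by move=> He; rewrite -mulA He. Qed.

(* f (ef)^-1 e is an inverse of ef, hence equals (ef)^-1, and it is idempotent;
   so is ef = ((ef)^-1)^-1. *)
Lemma idem_mul e f : idem e -> idem f -> idem (e * f).
Proof.
move=> He Hf; move Ep: (e * f) => p.
have pf : p * f = p by rewrite -Ep mul_idemK.
have ep : e * p = p by rewrite -Ep mulA He.
have Hz : f * p^-1 * e = p^-1.
  apply: inv_uniq; split.
  - by rewrite !mulA pf -[p * p^-1 * e * p]mulA ep mul_invK.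
  - by rewrite !mulA -[_ * e * p]mulA ep -[_ * p * f]mulA pf inv_mulKr.
have idem_pV : idem p^-1.
  rewrite /idem; have -> : p^-1 * p^-1 = f * p^-1 * e * (f * p^-1 * e) by rewrite Hz.
  by rewrite !mulA -[_ * e * f]mulA Ep inv_mulKr Hz.
by rewrite -(invK p) (idem_inv idem_pV).
Qed.

Lemma idem_mulC e f : idem e -> idem f -> e * f = f * e.
Proof.
move=> He Hf; have Hef := idem_mul He Hf; have Hfe := idem_mul Hf He.
rewrite -(idem_inv Hef); apply/esym/inv_uniq; split.
- by rewrite !mulA (mul_idemK _ Hf) (mul_idemK _ He) -mulA Hef.
- by rewrite !mulA (mul_idemK _ He) (mul_idemK _ Hf) -mulA Hfe.
Qed.

Lemma invM a b : (a * b)^-1 = b^-1 * a^-1.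
Proof.
apply/esym/inv_uniq; split.
- have -> : a * b * (b^-1 * a^-1) * (a * b) = a * ((b * b^-1) * (a^-1 * a)) * b.
    by rewrite !mulA.
  by rewrite (idem_mulC (idem_mulV b) (idem_Vmul a)) !mulA mul_invK mul_invKr.
- have -> : b^-1 * a^-1 * (a * b) * (b^-1 * a^-1) = b^-1 * ((a^-1 * a) * (b * b^-1)) * a^-1.
    by rewrite !mulA.
  by rewrite (idem_mulC (idem_Vmul a) (idem_mulV b)) !mulA inv_mulK inv_mulKr.
Qed.

Lemma greenR_mulV a b : a * a^-1 = b * b^-1 -> greenR mul a b.
Proof.
move=> eq_ab; split; right.
- by exists (b^-1 * a); rewrite mulA -eq_ab mul_invK.
- by exists (a^-1 * b); rewrite mulA eq_ab mul_invK.
Qed.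

Lemma mulV_idem_absorb x e f :
  idem e -> idem f -> x^-1 * x = e * f -> x * e = x /\ x * f = x.
Proof.
move=> He Hf Hx; have xef : x * (e * f) = x by rewrite -Hx mulA mul_invK.
split; rewrite -{1}xef -mulA.
- by rewrite -(mulA e) (idem_mulC Hf He) (mulA e) He xef.
- by rewrite -(mulA e) Hf xef.
Qed.

Lemma lmul_straight x a b :
  x^-1 * x = a * a^-1 * (b * b^-1) ->
  greenR mul (x * a) (x * b) /\ (x * a)^-1 * (x * b) = a^-1 * b.
Proof.
move=> Hx; have [xe xf] := mulV_idem_absorb (idem_mulV a) (idem_mulV b) Hx.
split.
- by apply: greenR_mulV; rewrite !invM !mulA -(mulA x a) xe -(mulA x b) xf.
- by rewrite invM -mulA (mulA _ x) Hx !mulA inv_mulK mul_invKr.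
Qed.

End InverseSemigroup.

Section FiniteInverseSemigroup.
Variables (T : finType) (mul : T -> T -> T) (inv : T -> T).
Hypothesis invQ : inverse_semigroup mul inv.

Local Notation "x * y" := (mul x y) : isg_scope.
Local Notation "x ^-1" := (inv x) : isg_scope.
Local Open Scope isg_scope.

Definition lideal (g : T) : {set T} := [set x | x * g == x].

Lemma lideal_proper g e :
  idem mul g -> idem mul e -> g * e = g -> g != e -> lideal g \proper lideal e.
Proof.
move=> idem_g idem_e ge ne_ge; apply/properP; split.
  by apply/subsetP => x; rewrite !inE => /eqP xg; rewrite -{1}xg -(mulA invQ) ge xg.
exists e; rewrite inE; first by rewrite idem_e.
apply: contra ne_ge => /eqP eg.
by rewrite -ge (idem_mulC invQ idem_g idem_e) eg.
Qed.

Lemma card_lideal_Vmul a : #|lideal (a^-1 * a)| <= #|lideal (a * a^-1)|.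
Proof.
have inj : {in lideal (a^-1 * a) &, injective (fun x => x * a^-1)}.
  move=> x y; rewrite !inE => /eqP xa /eqP ya /= xy.
  by rewrite -xa -ya !(mulA invQ) xy.
rewrite -(card_in_imset inj); apply/subset_leq_card/subsetP => _ /imsetP[x _ ->].
by rewrite inE (mulA invQ) (inv_mulKr invQ).
Qed.

Variable S : {set T}.
Hypothesis ordS : left_I_order mul inv S.

Lemma left_I_order_mulV_onto g : idem mul g -> exists2 x, x \in S & x^-1 * x = g.
Proof.
have [n] := ubnP (#|T| - #|lideal g|); elim: n g => // n IH g lt_gn idem_g.
case: ordS => S_mul /(_ g) [a [b [Sa Sb g_ab]]].
have g_ba : g = b^-1 * a by rewrite -(idem_inv invQ idem_g) g_ab (invM invQ) (invK invQ).
have [->|ne_g] := eqVneq g (a^-1 * a); first by exists a.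
have ge : g * (a^-1 * a) = g by rewrite {1}g_ba (mulA invQ) (mul_invKr invQ) -g_ba.
have lt_card : #|lideal g| < #|lideal (a * a^-1)|.
  apply: leq_trans (card_lideal_Vmul a).
  exact: proper_card (lideal_proper idem_g (idem_Vmul invQ a) ge ne_g).
have lt_g : #|lideal g| < #|T| := leq_trans lt_card (max_card _).
have [y Sy y_a] := IH _ (leq_trans (ltn_sub2l lt_g lt_card) lt_gn) (idem_mulV invQ a).
exists (y * b); first exact: S_mul.
rewrite (invM invQ) -(mulA invQ) (mulA invQ y^-1) y_a !(mulA invQ).
by rewrite -(mulA invQ (b^-1 * a)) -g_ba -g_ab idem_g.
Qed.

End FiniteInverseSemigroup.

Theorem corollary2p5 (T : finType) (mul : T -> T -> T) (inv : T -> T)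
  (HQ : inverse_semigroup mul inv) (S : {set T}) :
  left_I_order mul inv S -> straight_left_I_order mul inv S.
Proof.
move=> ordS; split=> // q.
have [S_mul /(_ q) [a [b [Sa Sb ->]]]] := ordS.
have idem_ef := idem_mul HQ (idem_mulV HQ a) (idem_mulV HQ b).
have [x Sx x_ef] := left_I_order_mulV_onto HQ ordS idem_ef.
have [Rab q_ab] := lmul_straight HQ x_ef.
by exists (mul x a), (mul x b); split; rewrite ?q_ab //; apply: S_mul.
Qed.
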